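(* For all integers $n\ge 1$ and $d\ge 3$, $$m^*(n,d,d-1)\ge \frac{d-1}{e}\sqrt[d-1]{\frac{nd}{d-1}},$$ where $e$ is Euler's number.
   Context: For a binary matrix $M$ and a nonempty set $S$ of its columns, $S$ is a stopping set if the submatrix formed by $S$ has no row with exactly one $1$; $s(M)$ is the minimum size of a stopping set ($+\infty$ if none). $M$ is $(d,k)$-decodable if $s(M)\ge d+1$ and every column has exactly $k$ ones; $m^*(n,d,k)$ is the minimum $m$ such that an $m\times n$ $(d,k)$-decodable binary matrix exists. *)

From mathcomp Require Import all_boot all_algebra.
From Stdlib Require Import Reals.

Set Implicit Arguments.
Unset Strict Implicit.
Unset Printing Implicit Defensive.

Definition stopping_set (m n : nat) (M : 'M[bool]_(m, n)) (S : {set 'I_n}) : Prop :=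
  S != set0 /\ forall i : 'I_m, #|[set j in S | M i j]| != 1%N.

(* s(M) >= t  (with s(M) = +infinity when there is no stopping set). *)
Definition stopping_distance_ge (m n : nat) (M : 'M[bool]_(m, n)) (t : nat) : Prop :=
  forall S : {set 'I_n}, stopping_set M S -> (t <= #|S|)%N.

Definition decodable (m n : nat) (d k : nat) (M : 'M[bool]_(m, n)) : Prop :=
  stopping_distance_ge M d.+1 /\ forall j : 'I_n, #|[set i : 'I_m | M i j]| = k.

(* m*(n,d,k) >= x  (m* being the minimum m for which an m x n (d,k)-decodable
   matrix exists, +infinity if none exists). *)
Definition mstar_ge (n d k : nat) (x : R) : Prop :=
  forall (m : nat) (M : 'M[bool]_(m, n)), decodable d k M -> Rle x (INR m).

From mathcomp Require Import all_boot all_algebra.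
From Stdlib Require Import Reals Lra.

Set Implicit Arguments.
Unset Strict Implicit.
Unset Printing Implicit Defensive.

(* Write k = d - 1. The columns of a (k+1, k)-decodable matrix have pairwise
   distinct supports (two equal columns form a stopping set of size 2), and no
   (k+1)-set U of rows contains the supports of k+1 columns: a column inside U
   missing row i of U has support U \ {i}, so every row of U meets all but at
   most one of them and they would form a stopping set of size k+1.  Counting
   the pairs (column, U containing its support) gives n (m - k) <= k C(m, k+1),
   i.e. n (k+1) <= k C(m, k) <= k m^k / k!, and k^k <= e^k k! turns this into
   the bound (when m = k all supports are full, so n = 1). *)

Lemma exchange_sum_card (I J : finType) (A : {pred J}) (R : I -> J -> bool) :
  \sum_(i : I) #|[set j in A | R i j]| = \sum_(j in A) #|[set i | R i j]|.
Proof.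
transitivity (\sum_(i : I) \sum_(j in A) (R i j : nat)).
  by apply: eq_bigr => i _; rewrite -sum1dep_card big_mkcondr.
rewrite exchange_big /=; apply: eq_bigr => j _.
by rewrite -sum1dep_card [RHS]big_mkcond.
Qed.

Lemma card_supersets_succ_ge (T : finType) (C : {set T}) :
  #|T| - #|C| <= #|[set U : {set T} | (#|U| == #|C|.+1) && (C \subset U)]|.
Proof.
have addC_inj : {in ~: C &, injective (fun x => x |: C)}.
  move=> x y; rewrite !inE => /negbTE xC _ eCxy.
  by have := setU11 x C; rewrite eCxy !inE xC orbF => /eqP.
rewrite -{1}(setCK C) -cardsCs -(card_in_imset addC_inj); apply: subset_leq_card.
apply/subsetP => U /imsetP[x]; rewrite inE => xC ->.
by rewrite cardsU1 -in_setC xC add1n eqxx subsetUr.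
Qed.

Definition col_support (m n : nat) (M : 'M[bool]_(m, n)) (j : 'I_n) : {set 'I_m} :=
  [set i | M i j].

Section Decodable.

Variables (m n k : nat) (M : 'M[bool]_(m, n)).
Hypotheses (k_ge2 : 1 < k) (decM : decodable k.+1 k M).

Lemma card_col_support j : #|col_support M j| = k.
Proof. by case: decM => _ /(_ j). Qed.

Lemma card_stopping_set_gt S : stopping_set M S -> k.+1 < #|S|.
Proof. by case: decM => /(_ S). Qed.

Lemma col_support_inj : 0 < k -> injective (col_support M).
Proof.
move=> k_gt0 j j' eM; apply/eqP; apply: contraT => neq_jj'.
have eMi i : M i j' = M i j by move/setP/(_ i): eM; rewrite !inE.
have : stopping_set M [set j; j'].
  split; first by apply/set0Pn; exists j; rewrite !inE eqxx.
  move=> i; have -> : [set x in [set j; j'] | M i x] = if M i j then [set j; j'] else set0.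
    apply/setP => x; rewrite !inE; case Mij: (M i j); rewrite ?inE;
    have [->|_] := eqVneq x j; rewrite ?Mij //;
    by have [->|_] := eqVneq x j'; rewrite ?eMi ?Mij.
  by case: (M i j); rewrite ?cards2 ?neq_jj' ?cards0.
by move/card_stopping_set_gt; rewrite cards2 neq_jj' !ltnS leqNgt k_gt0.
Qed.

Lemma cols_within_stopping_set (U : {set 'I_m}) (S : {set 'I_n}) :
  #|U| = k.+1 -> S \subset [set j | col_support M j \subset U] -> 2 < #|S| ->
  stopping_set M S.
Proof.
move=> cardU /subsetP SsubU cardS; split; first by rewrite -card_gt0 (ltn_trans _ cardS).
move=> i; have [iU|iNU] := boolP (i \in U); last first.
  suff -> : [set x in S | M i x] = set0 by rewrite cards0.
  apply/setP => x; rewrite !inE; apply/andP => -[/SsubU]; rewrite inE => /subsetP xU Mix.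
  by move: iNU; rewrite xU // inE.
have cardUi : #|U :\ i| = k by move: (cardsD1 i U); rewrite iU cardU add1n => -[].
have zeros_le1 : #|S :\: [set x | M i x]| <= 1.
  suff zero_col z : z \in S :\: [set x | M i x] -> col_support M z = U :\ i.
    apply/card_le1_eqP => x y /zero_col ex /zero_col ey.
    by apply: (col_support_inj (ltnW k_ge2)); rewrite ex ey.
  rewrite !inE => /andP[Miz /SsubU]; rewrite inE => zU.
  apply/eqP; rewrite eqEcard card_col_support cardUi leqnn andbT.
  apply/subsetP => i0 Mi0z; rewrite !inE (subsetP zU) // andbT.
  by apply: contraNneq Miz => <-; move: Mi0z; rewrite inE.
rewrite setIdE; apply/eqP => ones1; move: cardS zeros_le1.
by rewrite -(cardsID [set x | M i x] S) ones1 add1n ltnS ltnNge => /negbTE->.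
Qed.

Lemma card_cols_within_le (U : {set 'I_m}) :
  #|U| = k.+1 -> #|[set j | col_support M j \subset U]| <= k.
Proof.
move=> cardU; rewrite leqNgt; apply/negP => /card_geqP[s [uniq_s size_s sub_s]].
have cardS : #|[set x in s]| = k.+1 by rewrite cardsE (card_uniqP uniq_s).
have /card_stopping_set_gt : stopping_set M [set x in s].
  apply: (cols_within_stopping_set cardU); last by rewrite cardS.
  by apply/subsetP => x; rewrite inE => /sub_s.
by rewrite cardS ltnn.
Qed.

Lemma cols_mul_le_binomS : n * (m - k) <= k * 'C(m, k.+1).
Proof.
pose F := [set U : {set 'I_m} | #|U| == k.+1].
have lower : n * (m - k) <= \sum_j #|[set U in F | col_support M j \subset U]|.
  rewrite -[n in n * _]card_ord -sum_nat_const; apply: leq_sum => j _.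
  have := card_supersets_succ_ge (col_support M j).
  rewrite card_ord card_col_support => /leq_trans; apply; apply: subset_leq_card.
  by apply/subsetP => U; rewrite !inE.
have upper : \sum_(U in F) #|[set j | col_support M j \subset U]| <= k * 'C(m, k.+1).
  have <- : #|F| = 'C(m, k.+1) by rewrite card_draws card_ord.
  rewrite mulnC -sum_nat_const; apply: leq_sum => U; rewrite inE => /eqP.
  exact: card_cols_within_le.
by rewrite (leq_trans lower) // exchange_sum_card.
Qed.

Lemma cols_mul_le_binom : k < m -> n * k.+1 <= k * 'C(m, k).
Proof.
move=> k_lt_m; rewrite -(leq_pmul2l (_ : 0 < m - k)) ?subn_gt0 //.
rewrite mulnA (mulnC _ n) mulnCA -mul_bin_left mulnCA (mulnC k.+1) leq_mul2r.
by rewrite cols_mul_le_binomS orbT.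
Qed.

Lemma weight_le_rows : 0 < n -> k <= m.
Proof.
by move=> n_gt0; rewrite -(card_col_support (Ordinal n_gt0)) -[m in _ <= m]card_ord max_card.
Qed.

Lemma cols_le1_of_rows_eq : 0 < k -> m = k -> n <= 1.
Proof.
move=> k_gt0 m_eq_k; have full j : col_support M j = setT.
  by apply/eqP; rewrite eqEcard subsetT cardsT card_ord card_col_support m_eq_k leqnn.
rewrite -[n]card_ord; apply/card_le1_eqP => j j' _ _.
by apply: (col_support_inj k_gt0); rewrite !full.
Qed.

End Decodable.

Lemma ffact_le_expn (m k : nat) : m ^_ k <= expn m k.
Proof.
rewrite ffact_prod -[k in expn _ k]card_ord -prod_nat_const.
by apply: leq_prod => i _; apply: leq_subr.
Qed.

Lemma INR_expn (a b : nat) : INR (expn a b) = (INR a ^ b)%R.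
Proof. by elim: b => [|b IH]; rewrite ?expn0 // expnS mulnE mult_INR IH. Qed.

Lemma INR_pos (k : nat) : 0 < k -> (0 < INR k)%R.
Proof. by move=> k_gt0; apply: lt_0_INR; apply/ltP. Qed.

Lemma exp_inv_pow (k : nat) : 0 < k -> (exp (/ INR k) ^ k = exp 1)%R.
Proof.
move=> k_gt0; rewrite -(Rpower_pow k _ (exp_pos _)) /Rpower ln_exp Rinv_r //.
by have := INR_pos k_gt0; lra.
Qed.

Lemma succ_pow_le (k : nat) : (INR k.+1 ^ k <= exp 1 * INR k ^ k)%R.
Proof.
case: k => [|k]; first by rewrite /= Rmult_1_r; have := exp_ineq1_le 1; lra.
move: k.+1 (ltn0Sn k) => K K_gt0; have K_pos := INR_pos K_gt0.
have -> : INR K.+1 = (INR K * (1 + / INR K))%R by rewrite S_INR; field; lra.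
rewrite Rpow_mult_distr [X in (_ <= X)%R]Rmult_comm -(exp_inv_pow K_gt0).
apply: Rmult_le_compat_l; first exact: pow_le (Rlt_le _ _ K_pos).
apply: pow_incr; split; last exact: exp_ineq1_le.
by have := Rinv_0_lt_compat _ K_pos; lra.
Qed.

Lemma pow_le_exp1_pow_fact (k : nat) : (INR k ^ k <= exp 1 ^ k * INR k`!)%R.
Proof.
elim: k => [|k IH]; first by rewrite /=; lra.
rewrite factS mulnE mult_INR -!tech_pow_Rmult.
apply: Rle_trans (Rmult_le_compat_l _ _ _ (pos_INR _) (succ_pow_le k)) _.
have : (0 <= INR k.+1 * exp 1)%R.
  by apply: Rmult_le_pos; [exact: pos_INR | exact: Rlt_le (exp_pos 1)].
nra.
Qed.

Lemma pow_div_fact_le (x : R) (k : nat) : (0 <= x)%R -> 0 < k ->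
  (x ^ k / INR k`! <= (exp 1 * x / INR k) ^ k)%R.
Proof.
move=> x_ge0 k_gt0; have k_pos := INR_pos k_gt0.
have fact_pos := INR_pos (fact_gt0 k).
have kk_pos : (0 < INR k ^ k)%R by exact: pow_lt.
have -> : ((exp 1 * x / INR k) ^ k = x ^ k * (exp 1 ^ k / INR k ^ k))%R.
  by rewrite /Rdiv !Rpow_mult_distr pow_inv; ring.
apply: Rmult_le_compat_l; first exact: pow_le.
apply: (Rmult_le_reg_r (INR k`! * INR k ^ k)); first exact: Rmult_lt_0_compat.
have -> : (/ INR k`! * (INR k`! * INR k ^ k) = INR k ^ k)%R by field; lra.
have -> : (exp 1 ^ k / INR k ^ k * (INR k`! * INR k ^ k) = exp 1 ^ k * INR k`!)%R.
  by field; lra.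
exact: pow_le_exp1_pow_fact.
Qed.

Lemma Rpower_inv_le (a b : R) (k : nat) : (0 < a)%R -> (0 < b)%R -> 0 < k ->
  (a <= b ^ k)%R -> (Rpower a (/ INR k) <= b)%R.
Proof.
move=> a_pos b_pos k_gt0 a_le; have k_pos := INR_pos k_gt0.
rewrite -[X in (_ <= X)%R](Rpower_1 _ b_pos) -(Rinv_r (INR k)); last lra.
rewrite -Rpower_mult Rpower_pow //; apply: Rle_Rpower_l => //.
by have := Rinv_0_lt_compat _ k_pos; lra.
Qed.

Lemma decodable_ratio_bound (m n k : nat) (M : 'M[bool]_(m, n)) :
  1 < k -> 0 < n -> decodable k.+1 k M ->
  (INR (n * k.+1) / INR k <= (exp 1 * INR m / INR k) ^ k)%R.
Proof.
move=> k_ge2 n_gt0 decM; have k_gt0 : 0 < k := ltnW k_ge2.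
have k_pos := INR_pos k_gt0; rewrite mulnE mult_INR.
have [k_lt_m | m_le_k] := ltnP k m.
  have nat_bound : n * k.+1 * k`! <= k * expn m k.
    apply: leq_trans (leq_mul (cols_mul_le_binom k_ge2 decM k_lt_m) (leqnn k`!)) _.
    by rewrite -mulnA bin_ffact leq_mul2l ffact_le_expn orbT.
  move/leP/le_INR: nat_bound; rewrite !mulnE !mult_INR INR_expn => nat_bound.
  have fact_pos := INR_pos (fact_gt0 k).
  apply: Rle_trans (pow_div_fact_le (pos_INR m) k_gt0).
  apply: (Rmult_le_reg_r (INR k * INR k`!)); first exact: Rmult_lt_0_compat.
  have -> : (INR n * INR k.+1 / INR k * (INR k * INR k`!) = INR n * INR k.+1 * INR k`!)%R.
    by field; lra.
  have -> : (INR m ^ k / INR k`! * (INR k * INR k`!) = INR k * INR m ^ k)%R by field; lra.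
  exact: nat_bound.
have m_eq_k : m = k by apply/eqP; rewrite eqn_leq m_le_k (weight_le_rows decM n_gt0).
have n_eq1 : n = 1 by apply/eqP; rewrite eqn_leq n_gt0 (cols_le1_of_rows_eq decM k_gt0 m_eq_k).
have k_ge1 : (1 <= INR k)%R by apply: (le_INR 1); apply/leP.
have e_ge2 : (2 <= exp 1)%R by have := exp_ineq1_le 1; lra.
rewrite m_eq_k n_eq1 (S_INR k) (_ : exp 1 * INR k / INR k = exp 1)%R; last by field; lra.
apply: Rle_trans (_ : exp 1 ^ 1 <= _)%R; last by apply: Rle_pow; [lra | apply/leP].
change (INR 1) with 1%R; apply: (Rmult_le_reg_r (INR k)) => //.
have -> : (1 * (INR k + 1) / INR k * INR k = INR k + 1)%R by field; lra.
rewrite pow_1; nra.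
Qed.

Theorem theorem6p4 (n d : nat) :
  (1 <= n)%N -> (3 <= d)%N ->
  mstar_ge n d (d - 1)
    (Rmult (Rdiv (INR (d - 1)) (exp 1))
           (Rpower (Rdiv (INR (n * d)) (INR (d - 1))) (Rinv (INR (d - 1))))).
Proof.
move=> n_gt0; case: d => [//|k]; rewrite ltnS subn1 /= => k_ge2 m M decM.
have k_gt0 : 0 < k := ltnW k_ge2.
have m_pos := INR_pos (leq_trans k_gt0 (weight_le_rows decM n_gt0)).
have k_pos := INR_pos k_gt0.
have e_pos := exp_pos 1.
have ratio_pos : (0 < INR (n * k.+1) / INR k)%R.
  by apply: Rdiv_lt_0_compat => //; apply: INR_pos; rewrite muln_gt0 n_gt0.
have root_le : (Rpower (INR (n * k.+1) / INR k) (/ INR k) <= exp 1 * INR m / INR k)%R.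
  apply: Rpower_inv_le ratio_pos _ k_gt0 (decodable_ratio_bound k_ge2 n_gt0 decM).
  by apply: Rdiv_lt_0_compat => //; apply: Rmult_lt_0_compat.
apply: Rle_trans (Rmult_le_compat_l _ _ _ _ root_le) _.
  by apply: Rlt_le; apply: Rdiv_lt_0_compat.
by right; field; lra.
Qed.
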